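(* Let $R$ be an almost Dedekind domain and $\mathcal{M}$ its maximal space with the inverse topology. Then: (a) if $\mathcal{M}$ is countable, then $\mathcal{M}$ is scattered; (b) if $\mathcal{M}$ is scattered, then $R$ is SP-scattered.
   Context: $R$ almost Dedekind: $R_M$ is a DVR for each maximal $M$; $K$ quotient field. $\mathcal{M}$ is $\mathrm{Max}(R)$ with the inverse topology (restriction of the coarsest topology on $\mathrm{Spec}(R)$ in which Zariski-open Zariski-compact sets are closed). A space $X$ is scattered if $\partial^\alpha(X)=\emptyset$ for some ordinal $\alpha$, where $\partial^0(X)=X$, $\partial^{\gamma+1}(X)$ is the set of non-isolated points of $\partial^\gamma(X)$, and $\partial^\lambda(X)=\bigcap_{\beta<\lambda}\partial^\beta(X)$ for limit $\lambda$. A maximal ideal $M$ of an almost Dedekind domain $A$ is critical if every finitely generated ideal $J\subseteq M$ satisfies $J\subseteq N^2$ for some maximal $N$; $\mathrm{Crit}(A)$ is the set of these. Recursively: $\mathrm{Crit}_0(R)=\mathrm{Max}(R)$, $T_0=R$; $\mathrm{Crit}_{\gamma+1}(R)=\{P\in\mathrm{Max}(R)\mid PT_\gamma\in\mathrm{Crit}(T_\gamma)\}$; $\mathrm{Crit}_\lambda(R)=\bigcap_{\gamma<\lambda}\mathrm{Crit}_\gamma(R)$ for limit $\lambda$; $T_\alpha=\bigcap\{R_P\mid P\in\mathrm{Crit}_\alpha(R)\}$ ($=K$ if empty). $R$ is SP-scattered if $\mathrm{Crit}_\alpha(R)=\emptyset$ for some ordinal $\alpha$. *)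

From mathcomp Require Import all_boot all_order all_algebra.
From mathcomp Require Import classical_sets.
Set Implicit Arguments. Unset Strict Implicit. Unset Printing Implicit Defensive.
Import Order.TTheory GRing.Theory Num.Theory.
Local Open Scope ring_scope.
Local Open Scope classical_set_scope.

(* Throughout, K is a field and rings are subrings A of K (as subsets). *)
Section Defs.
Variable K : fieldType.

Definition subring (A : set K) : Prop :=
  A 0 /\ A 1 /\ (forall x y, A x -> A y -> A (x - y)) /\
  (forall x y, A x -> A y -> A (x * y)).

Definition is_frac_field (A : set K) : Prop :=
  forall x : K, exists a b, A a /\ A b /\ b != 0 /\ x = a / b.

Definition ideal (A I : set K) : Prop :=
  I `<=` A /\ I 0 /\ (forall x y, I x -> I y -> I (x + y)) /\
  (forall a x, A a -> I x -> I (a * x)).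

Definition prime_ideal (A P : set K) : Prop :=
  ideal A P /\ P <> A /\ (forall x y, A x -> A y -> P (x * y) -> P x \/ P y).

Definition maximal_ideal (A M : set K) : Prop :=
  ideal A M /\ M <> A /\ (forall J, ideal A J -> M `<=` J -> J = M \/ J = A).

Definition ideal_gen (A : set K) (s : seq K) : set K :=
  [set x | exists r : seq K, size r = size s /\ (forall a, a \in r -> A a) /\
     x = \sum_(i < size s) r`_i * s`_i].

Definition fin_gen (A J : set K) : Prop :=
  exists s : seq K, (forall a, a \in s -> A a) /\ J = ideal_gen A s.

Definition ideal_ext (T I : set K) : set K :=
  [set x | exists s : seq (K * K), (forall z, z \in s -> T z.1 /\ I z.2) /\
     x = \sum_(z <- s) z.1 * z.2].

Definition ideal_sq (N : set K) : set K :=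
  [set x | exists s : seq (K * K), (forall z, z \in s -> N z.1 /\ N z.2) /\
     x = \sum_(z <- s) z.1 * z.2].

Definition localization (A P : set K) : set K :=
  [set x | exists a b, A a /\ A b /\ ~ P b /\ x = a / b].

(** Discrete valuation ring: V is the valuation ring of a (normalized)
    discrete valuation v : K^* -> Z (surjective), K being the fraction field. *)
Definition is_DVR (V : set K) : Prop :=
  exists v : K -> int,
    (forall x y, x != 0 -> y != 0 -> v (x * y) = v x + v y) /\
    (forall x y, x != 0 -> y != 0 -> x + y != 0 ->
        Order.min (v x) (v y) <= v (x + y)) /\
    (exists t, t != 0 /\ v t = 1) /\
    (forall x, V x <-> (x = 0 \/ 0 <= v x)).

Definition almost_dedekind (A : set K) : Prop :=
  forall M, maximal_ideal A M -> is_DVR (localization A M).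

Definition Spec (A : set K) : set (set K) := [set P | prime_ideal A P].
Definition Max (A : set K) : set (set K) := [set M | maximal_ideal A M].

Definition zariski_open (A : set K) (U : set (set K)) : Prop :=
  exists I, ideal A I /\ U = [set P | Spec A P /\ ~ (I `<=` P)].

Definition zariski_compact (A : set K) (U : set (set K)) : Prop :=
  forall C : set (set (set K)), (forall V, C V -> zariski_open A V) ->
    U `<=` \bigcup_(V in C) V ->
    exists s : seq (set (set K)), (forall V, V \in s -> C V) /\
      U `<=` [set P | exists V, V \in s /\ V P].

Definition is_topology_on (T : Type) (X : set T) (tau : set (set T)) : Prop :=
  (forall O, tau O -> O `<=` X) /\ tau X /\
  (forall F : set (set T), F `<=` tau -> tau (\bigcup_(O in F) O)) /\
  (forall O1 O2, tau O1 -> tau O2 -> tau (O1 `&` O2)).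

(** Inverse topology on Spec(A): the coarsest topology on Spec(A) in which
    the Zariski-open Zariski-compact sets are closed. *)
Definition inverse_open (A : set K) (O : set (set K)) : Prop :=
  forall tau, is_topology_on (Spec A) tau ->
    (forall U, zariski_open A U -> zariski_compact A U ->
        tau [set P | Spec A P /\ ~ U P]) ->
    tau O.

Definition maxspace_open (A : set K) (O' : set (set K)) : Prop :=
  exists O, inverse_open A O /\ O' = O `&` Max A.

End Defs.

(** Well-ordered index types (models of ordinals) *)
Definition is_wellorder (I : Type) (lt : I -> I -> Prop) : Prop :=
  well_founded lt /\ (forall x y z, lt x y -> lt y z -> lt x z) /\
  (forall x y, lt x y \/ x = y \/ lt y x).

Definition is_pred_of (I : Type) (lt : I -> I -> Prop) (j i : I) : Prop :=
  lt j i /\ ~ (exists k, lt j k /\ lt k i).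

(** Cantor-Bendixson derivatives along a well-order:
    D i = X if i is least, D (j+1) = non-isolated points of D j,
    D i = intersection of D j (j < i) at limits. *)
Definition derivative_seq (T : Type) (X : set T) (isopen : set T -> Prop)
  (I : Type) (lt : I -> I -> Prop) (D : I -> set T) : Prop :=
  forall i,
    (forall j, is_pred_of lt j i ->
       D i = [set x | D j x /\
                forall O, isopen O -> O x -> exists y, D j y /\ O y /\ y <> x]) /\
    (~ (exists j, is_pred_of lt j i) ->
       D i = [set x | X x /\ forall j, lt j i -> D j x]).

Definition scattered (T : Type) (X : set T) (isopen : set T -> Prop) : Prop :=
  exists (I : Type) (lt : I -> I -> Prop) (D : I -> set T) (i : I),
    is_wellorder lt /\ derivative_seq X isopen lt D /\ D i = set0.

Section Crit.
Variable K : fieldType.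

Definition Crit (A : set K) : set (set K) :=
  [set M | maximal_ideal A M /\
     forall J, ideal A J -> fin_gen A J -> J `<=` M ->
       exists N, maximal_ideal A N /\ J `<=` ideal_sq N].

(** T = intersection of R_P for P in C (= K if C is empty) *)
Definition overring (R : set K) (C : set (set K)) : set K :=
  [set x | forall P, C P -> localization R P x].

Definition crit_seq (R : set K) (I : Type) (lt : I -> I -> Prop)
  (C : I -> set (set K)) : Prop :=
  forall i,
    (forall j, is_pred_of lt j i ->
       C i = [set P | maximal_ideal R P /\
                Crit (overring R (C j)) (ideal_ext (overring R (C j)) P)]) /\
    (~ (exists j, is_pred_of lt j i) ->
       C i = [set P | maximal_ideal R P /\ forall j, lt j i -> C j P]).

Definition SP_scattered (R : set K) : Prop :=
  exists (I : Type) (lt : I -> I -> Prop) (C : I -> set (set K)) (i : I),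
    is_wellorder lt /\ crit_seq R lt C /\ C i = set0.

Definition countable_set (T : Type) (X : set T) : Prop :=
  exists f : T -> nat, forall x y, X x -> X y -> f x = f y -> x = y.

End Crit.

(* (a) The Cantor-Bendixson derivatives of Max(R) stabilise at a closed set F
   without isolated points.  If F were nonempty and Max(R) countable, one could
   choose x_1, x_2, ... in R so that each basic open set V(x_1, ..., x_n) meets F
   but misses the n-th maximal ideal.  Compactness of the inverse topology (a Zorn
   argument on ideals all of whose finite parts have a common zero in F) gives a
   prime ideal containing every x_n; it is nonzero, hence maximal in the
   one-dimensional ring R, and lies in F and in every V(x_1, ..., x_n), which is
   absurd.

   (b) By transfinite induction Crit_a(R) is contained in the a-th derivative of
   Max(R).  The key point is that if PT is critical in T = \bigcap_(Q in C) R_Q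
   then P is a limit point of C: if V(x_1, ..., x_n) isolated P from C,
   criticality would put (t, x_1, ..., x_n)T inside N^2 for a maximal ideal N
   of T (t a uniformizer of R_P); then N meets R outside P, and an element b of
   R in N but not in P forms with the x_i a family vanishing at no Q in C, so it
   generates T although it lies in N. *)

From mathcomp Require Import all_boot all_order all_algebra.
From mathcomp Require Import classical_sets boolp.
From mathcomp Require Import ring zify.
Set Implicit Arguments. Unset Strict Implicit. Unset Printing Implicit Defensive.
Import Order.TTheory GRing.Theory Num.Theory.
Local Open Scope ring_scope.
Local Open Scope classical_set_scope.

Lemma Zorn_bigcup_nonempty (T : Type) (P : set T -> Prop) (A0 : set T) :
  P A0 -> A0 !=set0 ->
  (forall F : set (set T), F `<=` P -> total_on F subset -> F !=set0 ->
     P (\bigcup_(X in F) X)) ->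
  exists A, P A /\ forall B, A `<` B -> ~ P B.
Proof.
move=> PA0 [t0 A0t0] Pchain.
have [|A [[A_0|PA] Amax]] := @Zorn_bigcup T (fun A => A = set0 \/ P A).
- move=> F FP Ftot; have [[G [FG PG]]|noP] := pselect (exists X, F X /\ P X).
    right; have -> : \bigcup_(X in F) X = \bigcup_(X in F `&` P) X.
      apply/seteqP; split => y [X FX Xy]; last by exists X => //; case: FX.
      exists X => //; split => //; case: (FP X FX) => // X0.
      by move: Xy; rewrite X0.
    by apply: Pchain; [move=> ? []|move=> ? ? [] ? _ [] ? _; exact: Ftot|exists G].
  left; apply/seteqP; split => // y [X FX Xy]; case: (FP X FX) => [X0|PX].
    by move: Xy; rewrite X0.
  by case: noP; exists X.
- by case: (Amax A0); [rewrite A_0; split=> // /(_ t0 A0t0)|right].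
- by exists A; split=> // B AB PB; apply: (Amax B AB); right.
Qed.

Lemma nat_dependent_choice (T : Type) (P : T -> Prop) (S : nat -> T -> T -> Prop)
    (x0 : T) :
  P x0 -> (forall n x, P x -> exists y, P y /\ S n x y) ->
  exists u : nat -> T, u 0%N = x0 /\ forall n, P (u n) /\ S n (u n) (u n.+1).
Proof.
move=> Px0 step.
have step' n x : exists y, P x -> P y /\ S n x y.
  by have [Px|nPx] := pselect (P x);
    [have [y ?] := step n x Px; exists y | exists x].
pose next n x := proj1_sig (cid (step' n x)).
pose u := fix u n := if n is k.+1 then next k (u k) else x0.
have Pu n : P (u n) by elim: n => // n IH; exact: (proj2_sig (cid (step' n _)) IH).1.
by exists u; split=> // n; split=> //; exact: (proj2_sig (cid (step' n _)) (Pu n)).2.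
Qed.

Lemma chain_bigcup_seq (T : eqType) (F : set (set T)) (ys : seq T) :
  total_on F subset -> F !=set0 ->
  (forall y, y \in ys -> (\bigcup_(X in F) X) y) ->
  exists2 X, F X & forall y, y \in ys -> X y.
Proof.
move=> Ftot [X0 FX0]; elim: ys => [|y ys IH] ysF; first by exists X0.
have [Y FY Yy] := ysF y (mem_head _ _).
have [X FX Xys] : exists2 X, F X & forall z, z \in ys -> X z.
  by apply: IH => z zys; apply: ysF; rewrite inE zys orbT.
case: (Ftot X Y FX FY) => XY.
  by exists Y => // z; rewrite inE => /orP[/eqP ->//|/Xys/XY].
by exists X => // z; rewrite inE => /orP[/eqP ->|/Xys]; [exact: XY|].
Qed.

Lemma increasing_seq_bigcup (T : eqType) (u : nat -> seq T) :
  (forall n, {subset u n <= u n.+1}) ->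
  forall zs : seq T, (forall z, z \in zs -> exists n, z \in u n) ->
  exists n, {subset zs <= u n}.
Proof.
move=> u_incr; have u_mono n k : (n <= k)%N -> {subset u n <= u k}.
  by move=> /subnK <-; elim: (k - n)%N => // i IH x /IH /u_incr.
elim=> [|z zs IH] zsu; first by exists 0%N.
have [k zuk] := zsu z (mem_head _ _).
have [n zsun] := IH (fun y yzs => zsu y (mem_behead (s := z :: zs) yzs)).
exists (maxn n k) => y; rewrite inE => /predU1P[->|/zsun].
  exact: (u_mono _ _ (leq_maxr n k) _ zuk).
exact: (u_mono _ _ (leq_maxl n k)).
Qed.

Lemma seq_choice (A B : eqType) (P : A -> B -> Prop) (s : seq A) :
  (forall a, a \in s -> exists b, P a b) ->
  exists bs : seq B, (forall a, a \in s -> exists2 b, b \in bs & P a b) /\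
    (forall b, b \in bs -> exists2 a, a \in s & P a b).
Proof.
elim: s => [|a s IH] sP; first by exists [::].
have [b Pab] := sP a (mem_head _ _).
have [bs [sbs bss]] := IH (fun a' a's => sP a' (mem_behead (s := a :: s) a's)).
exists (b :: bs); split=> [a'|b']; rewrite inE.
  case/predU1P=> [->|/sbs [b' b'bs Pab']]; first by exists b; rewrite ?mem_head.
  by exists b'; rewrite // inE b'bs orbT.
case/predU1P=> [->|/bss [a' a's Pa'b']]; first by exists a; rewrite ?mem_head.
by exists a'; rewrite // inE a's orbT.
Qed.

Section TransfiniteIteration.
Variables (T : Type) (X : set T) (d : set T -> set T).

(* [derivative_seq] and [crit_seq] are, up to conversion, transfinite iterations
   of the derived-set operator and of [crit_step] below. *)

Definition transfinite_iter (I : Type) (lt : I -> I -> Prop) (D : I -> set T) :=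
  forall i,
    (forall j, is_pred_of lt j i -> D i = d (D j)) /\
    (~ (exists j, is_pred_of lt j i) ->
       D i = [set x | X x /\ forall j, lt j i -> D j x]).

Lemma is_pred_of_unique (I : Type) (lt : I -> I -> Prop) j j' i :
  is_wellorder lt -> is_pred_of lt j i -> is_pred_of lt j' i -> j = j'.
Proof.
move=> [_ [_ ltT]] [ji nji] [j'i nj'i].
by case: (ltT j j') => [jj'|[//|j'j]]; [case: nji; exists j'|case: nj'i; exists j].
Qed.

Lemma exists_transfinite_iter (I : Type) (lt : I -> I -> Prop) :
  is_wellorder lt -> exists D, transfinite_iter lt D.
Proof.
move=> ltW; have ltwf := ltW.1.
pose step i (rec : forall j, lt j i -> set T) : set T :=
  match pselect (exists j, is_pred_of lt j i) with
  | left jP => d (rec (proj1_sig (cid jP)) (proj2_sig (cid jP)).1)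
  | right _ => [set x | X x /\ forall j (ji : lt j i), rec j ji x]
  end.
pose D := Fix ltwf (fun _ => set T) step.
have DE i : D i = step i (fun j _ => D j).
  rewrite /D Fix_eq // => k f g fg; rewrite /step; case: pselect => [jP|_].
    by rewrite fg.
  by apply/seteqP; split=> x [Xx fx]; split=> // j jk; rewrite ?fg // -fg.
exists D => i; split=> [j ji|noj]; rewrite DE /step; case: pselect => jP //.
- by rewrite (is_pred_of_unique ltW (proj2_sig (cid jP)) ji).
- by case: jP; exists j.
Qed.

End TransfiniteIteration.

Lemma transfinite_iter_sub (T : Type) (X : set T) (c d : set T -> set T)
    (good : set T -> Prop) (I : Type) (lt : I -> I -> Prop) (C D : I -> set T) :
  well_founded lt -> transfinite_iter X c lt C -> transfinite_iter X d lt D ->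
  (forall i, good (D i)) -> (forall A B, good B -> A `<=` B -> c A `<=` d B) ->
  forall i, C i `<=` D i.
Proof.
move=> ltwf Citer Diter Dgood cd; elim/(well_founded_ind ltwf) => i IH.
have [[Csucc Clim] [Dsucc Dlim]] := (Citer i, Diter i).
have [[j ji]|noj] := pselect (exists j, is_pred_of lt j i).
  by rewrite (Csucc j ji) (Dsucc j ji); apply: cd (IH j ji.1).
by rewrite (Clim noj) (Dlim noj) => x [Xx Cx]; split=> // j /[dup] /Cx /IH; apply.
Qed.

(* Without ordinals at hand, transfinite iterations of a deflationary operator d
   are indexed by its tower: the least family of subsets of X that contains
   X `&` (the intersection of any of its subfamilies) and is closed under d.  The
   tower is well-ordered by reverse inclusion and ends at the largest fixed
   point of d below X. *)
Section Tower.
Variables (T : Type) (X : set T) (d : set T -> set T).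
Hypothesis d_sub : forall A, d A `<=` A.

Definition tower_stable (F : set (set T)) :=
  (forall S : set (set T), S `<=` F -> F (X `&` \bigcap_(A in S) A)) /\
  (forall A, F A -> F (d A)).

Definition tower (A : set T) := forall F, tower_stable F -> F A.

Lemma tower_stable_tower : tower_stable tower.
Proof.
split; first by move=> S Stower F Fstable; apply: Fstable.1 => A /Stower; apply.
by move=> A towerA F Fstable; apply: Fstable.2; apply: towerA.
Qed.

Lemma tower_ind (P : set T -> Prop) :
  (forall S, S `<=` tower -> S `<=` P -> P (X `&` \bigcap_(A in S) A)) ->
  (forall A, tower A -> P A -> P (d A)) ->
  forall A, tower A -> P A.
Proof.
move=> Pcap Pd A /(_ (tower `&` P)) []//; split.
  move=> S SP; split; first by apply: tower_stable_tower.1 => B /SP [].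
  by apply: Pcap => B /SP [].
by move=> B [towerB PB]; split; [apply: tower_stable_tower.2|apply: Pd].
Qed.

Lemma tower_sub A : tower A -> A `<=` X.
Proof. by move: A; apply: tower_ind => [S _ _ x []|B _ BX x /d_sub /BX]. Qed.

Let extreme A := forall C, tower C -> A `<` C -> A `<=` d C.

Let extreme_cmp A : tower A -> extreme A ->
  forall C, tower C -> C `<=` d A \/ A `<=` C.
Proof.
move=> towerA extA; apply: tower_ind => [S Stower IH|C towerC [CdA|AC]].
- have [[s [Ss sdA]]|nos] := pselect (exists s, S s /\ s `<=` d A).
    by left=> x [_ Sx]; apply: sdA; apply: Sx.
  right=> x Ax; split; first exact: (tower_sub towerA).
  move=> s Ss; case: (IH s Ss) => [sdA|]; last exact.
  by case: nos; exists s.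
- by left=> x /d_sub /CdA.
- have [CA|nCA] := pselect (C `<=` A); last by right; apply: extA.
  by left; rewrite (_ : C = A) //; apply/seteqP.
Qed.

Let tower_extreme A : tower A -> extreme A.
Proof.
move: A; apply: tower_ind => [S Stower Sext|A towerA extA] C towerC.
- move=> [SC nCS]; have [s [Ss nCs]] : exists s, S s /\ ~ C `<=` s.
    apply: contrapT => allCs; apply: nCS => x Cx; split; first exact: (tower_sub towerC).
    move=> s Ss; apply: contrapT => nsx; apply: allCs; exists s; split=> // Cs.
    exact/nsx/Cs.
  case: (extreme_cmp (Stower s Ss) (Sext s Ss) towerC) => [Cds|sC].
    by case: nCs => x /Cds /d_sub.
  by move=> x [_ Sx]; apply: (Sext s Ss C towerC) => //; apply: Sx.
- move=> [dAC nCdA]; case: (extreme_cmp towerA extA towerC) => [CdA|AC].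
    by case: nCdA.
  have [CA|nCA] := pselect (C `<=` A).
    by rewrite (_ : C = A) //; apply/seteqP.
  by move=> x /d_sub Ax; apply: (extA C towerC) => //; split.
Qed.

Lemma tower_cmp A C : tower A -> tower C -> C `<=` d A \/ A `<=` C.
Proof. by move=> towerA; apply: extreme_cmp => //; apply: tower_extreme. Qed.

Lemma tower_total A C : tower A -> tower C -> A `<=` C \/ C `<=` A.
Proof.
move=> towerA towerC; case: (tower_cmp towerA towerC) => [CdA|]; last by left.
by right=> x /CdA /d_sub.
Qed.

Lemma tower_fixpoint_sub A : tower A -> d A = A -> forall C, tower C -> A `<=` C.
Proof.
move=> towerA dA; apply: tower_ind => [S _ SA x Ax|C towerC AC].
  by split; [exact: (tower_sub towerA)|move=> s /SA; apply].
case: (tower_cmp towerC towerA) => // CA.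
by rewrite (_ : C = A) ?dA //; apply/seteqP.
Qed.

Lemma tower_has_max (S : set (set T)) : S `<=` tower -> S !=set0 ->
  exists2 m, S m & forall s, S s -> s `<=` m.
Proof.
move=> Stower [s0 Ss0].
pose U := X `&` \bigcap_(A in [set A | tower A /\ forall s, S s -> s `<=` A]) A.
have towerU : tower U by apply: tower_stable_tower.1 => A [].
have sU s : S s -> s `<=` U.
  move=> Ss x sx; split; first exact: (tower_sub (Stower s Ss)).
  by move=> A [_ sA]; apply: sA Ss _ sx.
have [SU|nSU] := pselect (S U); first by exists U.
have sdU s : S s -> s `<=` d U.
  move=> Ss; case: (tower_cmp towerU (Stower s Ss)) => // Us.
  by case: nSU; rewrite (_ : U = s) //; apply/seteqP; split; [|apply: sU].
have dUU : d U = U.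
  apply/seteqP; split=> // x [_ Ux]; apply: Ux; split=> //.
  exact: tower_stable_tower.2.
case: nSU; rewrite (_ : U = s0) //; apply/seteqP; split; last exact: sU.
exact: (tower_fixpoint_sub towerU dUU (Stower s0 Ss0)).
Qed.

Let tower_elt := {A : set T | tower A}.
Let tower_lt (a b : tower_elt) := proj1_sig b `<` proj1_sig a.

Let tower_lt_wf : well_founded tower_lt.
Proof.
move=> a; apply: contrapT => na.
pose S := [set A | exists p : tower A, ~ Acc tower_lt (exist _ A p)].
have [m [pm nm] mmax] : exists2 m, S m & forall s, S s -> s `<=` m.
  apply: tower_has_max; first by move=> A [].
  by exists (proj1_sig a); case: a na => A p na; exists p.
apply: nm; constructor => b ba; apply: contrapT => nb.
have /mmax bm : S (proj1_sig b) by case: b ba nb => B pB ba nb; exists pB.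
by case: ba => _; apply.
Qed.

Let tower_lt_trans (a b c : tower_elt) : tower_lt a b -> tower_lt b c -> tower_lt a c.
Proof.
move=> [ba nab] [cb nbc]; split=> [x /cb /ba //|ac].
by apply: nab => x /ac /cb.
Qed.

Let tower_lt_total (a b : tower_elt) : tower_lt a b \/ a = b \/ tower_lt b a.
Proof.
case: a b => [A pA] [B pB]; rewrite /tower_lt /=.
have eqAB : A = B -> exist tower A pA = exist tower B pB.
  by move=> eAB; subst B; rewrite (Prop_irrelevance pA pB).
case: (tower_total pA pB) => [AB|BA].
  have [BA|nBA] := pselect (B `<=` A); last by right; right.
  by right; left; apply/eqAB/seteqP.
have [AB|nAB] := pselect (A `<=` B); last by left.
by right; left; apply/eqAB/seteqP.
Qed.

Let tower_lt_wellorder : is_wellorder tower_lt.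
Proof. by split; [exact: tower_lt_wf|split; [exact: tower_lt_trans|exact: tower_lt_total]]. Qed.

Let tower_succ (a b : tower_elt) : is_pred_of tower_lt a b -> sval b = d (sval a).
Proof.
case: a b => [A pA] [B pB] [[BA nAB] noC] /=.
have BdA : B `<=` d A by case: (tower_cmp pA pB) => // AB; case: nAB.
apply/seteqP; split=> //; apply: contrapT => ndAB.
have [dAA|ndAA] := pselect (d A = A); first by case: nAB; apply: tower_fixpoint_sub.
have pdA : tower (d A) by apply: tower_stable_tower.2.
apply: noC; exists (exist _ (d A) pdA); split; split=> //= dAsA.
by apply: ndAA; apply/seteqP; split.
Qed.

Let tower_limit (b : tower_elt) : ~ (exists a, is_pred_of tower_lt a b) ->
  sval b = [set x | X x /\ forall a, tower_lt a b -> sval a x].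
Proof.
case: b => B pB noC /=.
pose G := X `&` \bigcap_(A in [set A | tower A /\ B `<` A]) A.
have towerG : tower G by apply: tower_stable_tower.1 => A [].
have BG : B `<=` G.
  by move=> x Bx; split; [exact: (tower_sub pB)|move=> A [_ [BA _]]; apply: BA].
apply/seteqP; split=> [x Bx|].
  by split; [exact: (tower_sub pB)|case=> A pA [BA _]; apply: BA].
have -> : [set x | X x /\ forall a, tower_lt a (exist _ B pB) -> sval a x] = G.
  apply/seteqP; split=> x [Xx Bx]; split=> //.
    by move=> A [pA BA]; exact: (Bx (exist _ A pA) BA).
  by case=> A pA /= BA; apply: Bx; split.
apply: contrapT => nGB; apply: noC; exists (exist _ G towerG); split; first by split.
move=> [[C pC] [[CG nGC] [BC nCB]]].
by apply: nGC => x [_ Gx]; apply: Gx; split.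
Qed.

Lemma tower_transfinite_iter :
  exists (I : Type) (lt : I -> I -> Prop) (D : I -> set T) (i : I),
    is_wellorder lt /\ transfinite_iter X d lt D /\ d (D i) = D i.
Proof.
pose F := X `&` \bigcap_(A in tower) A.
have towerF : tower F by apply: tower_stable_tower.1.
exists tower_elt, tower_lt, sval, (exist _ F towerF).
split; first exact: tower_lt_wellorder.
split; first by move=> b; split=> [a|]; [exact: tower_succ|exact: tower_limit].
by apply/seteqP; split=> // x [_ Fx]; apply: Fx; apply: tower_stable_tower.2.
Qed.

End Tower.

Section DerivedSet.
Variables (T : Type) (X : set T) (isopen : set T -> Prop).

Definition derived (A : set T) : set T :=
  [set x | A x /\ forall O, isopen O -> O x -> exists y, A y /\ O y /\ y <> x].

Definition closed_in (A : set T) : Prop :=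
  forall x, X x -> ~ A x -> exists O, isopen O /\ O x /\ forall y, O y -> ~ A y.

Lemma derived_sub A : derived A `<=` A.
Proof. by move=> x []. Qed.

Lemma closed_in_derived A : closed_in A -> closed_in (derived A).
Proof.
move=> Aclosed x Xx ndAx; have [Ax|nAx] := pselect (A x); last first.
  have [O [Oopen [Ox OA]]] := Aclosed x Xx nAx.
  by exists O; split=> //; split=> // y Oy [Ay _]; exact: OA Oy Ay.
have [O [Oopen [Ox Ox_only]]] :
    exists O, isopen O /\ O x /\ forall y, A y -> O y -> y = x.
  apply: contrapT => noO; apply: ndAx; split=> // O Oopen Ox.
  apply: contrapT => noy; apply: noO; exists O; split=> //; split=> // y Ay Oy.
  by apply: contrapT => yx; apply: noy; exists y.
exists O; split=> //; split=> // y Oy dAy.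
by apply: ndAx; rewrite -(Ox_only y (derived_sub dAy) Oy).
Qed.

Lemma closed_in_bigcap (I : Type) (P : set I) (D : I -> set T) :
  (forall i, P i -> closed_in (D i)) ->
  closed_in [set x | X x /\ forall i, P i -> D i x].
Proof.
move=> Dclosed x Xx nDx.
have [i [Pi nDix]] : exists i, P i /\ ~ D i x.
  apply: contrapT => allD; apply: nDx; split=> // i Pi.
  by apply: contrapT => nDix; apply: allD; exists i.
have [O [Oopen [Ox OD]]] := Dclosed i Pi x Xx nDix.
by exists O; split=> //; split=> // y Oy [_ Dy]; exact: OD Oy (Dy i Pi).
Qed.

Lemma transfinite_derived_closed (I : Type) (lt : I -> I -> Prop) (D : I -> set T) :
  well_founded lt -> transfinite_iter X derived lt D ->
  forall i, D i `<=` X /\ closed_in (D i).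
Proof.
move=> ltwf Diter; elim/(well_founded_ind ltwf) => i IH.
have [Dsucc Dlim] := Diter i.
have [[j ji]|noj] := pselect (exists j, is_pred_of lt j i).
  have [DjX Djclosed] := IH j ji.1; rewrite (Dsucc j ji).
  by split; [move=> x /derived_sub /DjX|exact: closed_in_derived].
rewrite (Dlim noj); split; first by move=> x [].
by apply: closed_in_bigcap => j /IH [].
Qed.

Lemma derived_closed_limit (A B : set T) x :
  closed_in B -> A `<=` B -> X x ->
  (forall O, isopen O -> O x -> exists y, A y /\ O y /\ y <> x) -> derived B x.
Proof.
move=> Bclosed AB Xx xlim; have Bx : B x.
  apply: contrapT => nBx; have [O [Oopen [Ox OB]]] := Bclosed x Xx nBx.
  by have [y [Ay [Oy _]]] := xlim O Oopen Ox; apply: OB Oy (AB y Ay).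
split=> // O Oopen Ox; have [y [Ay [Oy yx]]] := xlim O Oopen Ox.
by exists y; split=> //; apply: AB.
Qed.

End DerivedSet.

Section Subring.
Variable K : fieldType.
Variable A : set K.
Hypothesis Asub : subring A.

Lemma subring0 : A 0. Proof. by case: Asub. Qed.
Lemma subring1 : A 1. Proof. by case: Asub => _ []. Qed.
Lemma subringB x y : A x -> A y -> A (x - y).
Proof. by case: Asub => _ [_ []] AB _; apply: AB. Qed.
Lemma subringM x y : A x -> A y -> A (x * y).
Proof. by case: Asub => _ [_ []] _ AM; apply: AM. Qed.
Lemma subringN x : A x -> A (- x).
Proof. by move=> Ax; rewrite -sub0r; apply: subringB => //; exact: subring0. Qed.
Lemma subringD x y : A x -> A y -> A (x + y).
Proof. by move=> Ax Ay; rewrite -[y]opprK; apply/subringB/subringN. Qed.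
Lemma subringX x n : A x -> A (x ^+ n).
Proof.
move=> Ax; elim: n => [|n IH]; first by rewrite expr0; exact: subring1.
by rewrite exprS; exact: subringM.
Qed.

Section Ideal.
Variable I : set K.
Hypothesis Iideal : ideal A I.

Lemma ideal_sub : I `<=` A. Proof. by case: Iideal. Qed.
Lemma ideal0 : I 0. Proof. by case: Iideal => _ []. Qed.
Lemma idealD x y : I x -> I y -> I (x + y).
Proof. by case: Iideal => _ [_ []] ID _; apply: ID. Qed.
Lemma ideal_mull a x : A a -> I x -> I (a * x).
Proof. by case: Iideal => _ [_ []] _ IM; apply: IM. Qed.
Lemma ideal_mulr a x : A a -> I x -> I (x * a).
Proof. by rewrite mulrC; apply: ideal_mull. Qed.

Lemma ideal1_eq : I 1 -> I = A.
Proof.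
move=> I1; apply/seteqP; split; first exact: ideal_sub.
by move=> a Aa; rewrite -(mulr1 a); apply: ideal_mull.
Qed.

Lemma ideal_sum (T : eqType) (s : seq T) (F : T -> K) :
  (forall z, z \in s -> I (F z)) -> I (\sum_(z <- s) F z).
Proof.
elim: s => [|z s IH] sI; first by rewrite big_nil; exact: ideal0.
rewrite big_cons; apply: idealD; first by apply: sI; rewrite inE eqxx.
by apply: IH => w ws; apply: sI; rewrite inE ws orbT.
Qed.

Lemma notin_ideal_neq0 b : ~ I b -> b != 0.
Proof. by move=> nIb; apply/eqP => b0; apply: nIb; rewrite b0; exact: ideal0. Qed.

End Ideal.

Definition ideal_adjoin (M : set K) (x : K) : set K :=
  [set y | exists m r, M m /\ A r /\ y = m + r * x].

Lemma ideal_adjoin_ideal M x : ideal A M -> A x -> ideal A (ideal_adjoin M x).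
Proof.
move=> Mideal Ax.
split.
  by move=> _ [m [r [Mm [Ar ->]]]]; apply: subringD; [exact: ideal_sub Mm|exact: subringM].
split; first by exists 0, 0; split; [exact: ideal0|split; [exact: subring0|ring]].
split.
  move=> _ _ [m [r [Mm [Ar ->]]]] [m' [r' [Mm' [Ar' ->]]]].
  exists (m + m'), (r + r'); split; first exact: idealD.
  by split; [exact: subringD|ring].
move=> a _ Aa [m [r [Mm [Ar ->]]]]; exists (a * m), (a * r).
by split; [exact: ideal_mull|split; [exact: subringM|ring]].
Qed.

Lemma ideal_adjoin_sub M x : M `<=` ideal_adjoin M x.
Proof. by move=> m Mm; exists m, 0; split=> //; split; [exact: subring0|ring]. Qed.

Lemma ideal_adjoin_mem M x : ideal A M -> ideal_adjoin M x x.
Proof. by move=> Mideal; exists 0, 1; split; [exact: ideal0|split; [exact: subring1|ring]]. Qed.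

Lemma ideal_adjoin_seq (L : set K) x (ys : seq K) :
  (forall y, y \in ys -> ideal_adjoin L x y) ->
  exists ls : seq K, (forall l, l \in ls -> L l) /\
    forall Q, ideal A Q -> (forall l, l \in ls -> Q l) -> Q x -> forall y, y \in ys -> Q y.
Proof.
elim: ys => [|y ys IH] ysLx; first by exists [::].
have [m [r [Lm [Ar ->]]]] := ysLx y (mem_head _ _).
have [ls [lsL lsQ]] : exists ls : seq K, (forall l, l \in ls -> L l) /\
    forall Q, ideal A Q -> (forall l, l \in ls -> Q l) -> Q x -> forall y, y \in ys -> Q y.
  by apply: IH => z zys; apply: ysLx; rewrite inE zys orbT.
exists (m :: ls); split; first by move=> l; rewrite inE => /orP[/eqP ->|/lsL].
move=> Q Qideal mlsQ Qx z; rewrite inE => /orP[/eqP ->|zys].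
  by apply: idealD (ideal_mull _ _ Qx) => //; apply: mlsQ; rewrite inE eqxx.
by apply: lsQ => // l lls; apply: mlsQ; rewrite inE lls orbT.
Qed.

Lemma maximal_ideal_comaximal M x : maximal_ideal A M -> A x -> ~ M x ->
  exists m r, M m /\ A r /\ 1 = m + r * x.
Proof.
move=> [Mideal [_ Mmax]] Ax nMx.
have [MxM|MxA] := Mmax _ (ideal_adjoin_ideal Mideal Ax) (@ideal_adjoin_sub M x).
  by case: nMx; rewrite -MxM; exact: ideal_adjoin_mem.
have : ideal_adjoin M x 1 by rewrite MxA; exact: subring1.
by move=> [m [r [Mm [Ar e]]]]; exists m, r.
Qed.

Lemma maximal_ideal_not1 M : maximal_ideal A M -> ~ M 1.
Proof. by move=> [Mideal [MA _]] M1; apply/MA/ideal1_eq. Qed.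

Lemma prime_ideal_not1 P : prime_ideal A P -> ~ P 1.
Proof. by move=> [Pideal [PA _]] P1; apply/PA/ideal1_eq. Qed.

Lemma maximal_ideal_prime M : maximal_ideal A M -> prime_ideal A M.
Proof.
move=> Mmax; have [Mideal [MA _]] := Mmax; split=> //; split=> // x y Ax Ay Mxy.
have [Mx|nMx] := pselect (M x); [by left|right].
have [m [r [Mm [Ar e]]]] := maximal_ideal_comaximal Mmax Ax nMx.
rewrite -[y]mul1r e mulrDl -mulrA.
by apply: idealD => //; [exact: ideal_mulr|exact: ideal_mull].
Qed.

Lemma prime_ideal_expn P x n : prime_ideal A P -> A x -> P (x ^+ n) -> P x.
Proof.
move=> Pprime Ax; elim: n => [|n IH]; first by rewrite expr0 => /(prime_ideal_not1 Pprime).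
rewrite exprS => Pxxn; have [_ [_ Pmul]] := Pprime.
by case: (Pmul _ _ Ax (subringX n Ax) Pxxn) => // /IH.
Qed.

Lemma prime_ideal_notinM P b c : prime_ideal A P -> A b -> A c ->
  ~ P b -> ~ P c -> ~ P (b * c).
Proof. by move=> [_ [_ Pmul]] Ab Ac nPb nPc /Pmul [] // /[swap] ?; apply. Qed.

Lemma ideal_bigcup_chain (F : set (set K)) : (forall X, F X -> ideal A X) ->
  total_on F subset -> F !=set0 -> ideal A (\bigcup_(X in F) X).
Proof.
move=> Fideal Ftot [X0 FX0].
split; first by move=> y [X FX Xy]; exact: (ideal_sub (Fideal X FX) Xy).
split; first by exists X0 => //; exact: ideal0 (Fideal _ FX0).
split.
  move=> y z [X FX Xy] [Y FY Yz]; case: (Ftot X Y FX FY) => XY.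
    by exists Y => //; apply: idealD (Fideal _ FY) _ _ _ Yz; apply: XY.
  by exists X => //; apply: idealD (Fideal _ FX) _ _ Xy _; apply: XY.
by move=> a y Aa [X FX Xy]; exists X => //; exact: ideal_mull (Fideal _ FX) _ _ Aa Xy.
Qed.

Lemma exists_maximal_avoiding_powers L x :
  ideal A L -> A x -> (forall n, ~ L (x ^+ n)) ->
  exists P, (ideal A P /\ L `<=` P /\ forall n, ~ P (x ^+ n)) /\
    forall B, P `<` B -> ~ (ideal A B /\ L `<=` B /\ forall n, ~ B (x ^+ n)).
Proof.
move=> Lideal Ax Lx; apply: (Zorn_bigcup_nonempty (A0 := L)); first by split=> //; split.
  by exists 0; exact: ideal0 Lideal.
move=> F FP Ftot Fn0; split; first by apply: ideal_bigcup_chain => // X /FP [].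
split; first by case: Fn0 => X FX y Ly; exists X => //; case: (FP X FX) => _ [+ _]; apply.
by move=> n [X FX Xxn]; case: (FP X FX) => _ [_ Xx]; exact: Xx n Xxn.
Qed.

Lemma prime_ideal_avoiding_powers L x :
  ideal A L -> A x -> (forall n, ~ L (x ^+ n)) ->
  exists P, prime_ideal A P /\ L `<=` P /\ forall n, ~ P (x ^+ n).
Proof.
move=> Lideal Ax Lx.
have [P [[Pideal [LP Px]] Pmax]] := exists_maximal_avoiding_powers Lideal Ax Lx.
exists P; split=> //; split=> //; split.
  by move=> PA; apply: (Px 0%N); rewrite expr0 PA; exact: subring1.
move=> a b Aa Ab Pab; apply: contrapT => /not_orP [nPa nPb].
have adjoin_hits c : A c -> ~ P c -> exists n p r, P p /\ A r /\ x ^+ n = p + r * c.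
  move=> Ac nPc; apply: contrapT => nohit; apply: (Pmax (ideal_adjoin P c)).
    split; first exact: ideal_adjoin_sub.
    by move=> PcP; apply/nPc/PcP/ideal_adjoin_mem.
  split; first exact: ideal_adjoin_ideal.
  split; first by move=> y /LP; apply: ideal_adjoin_sub.
  by move=> n [p [r [Pp [Ar e]]]]; apply: nohit; exists n, p, r.
have [n [p1 [r1 [Pp1 [Ar1 e1]]]]] := adjoin_hits a Aa nPa.
have [m [p2 [r2 [Pp2 [Ar2 e2]]]]] := adjoin_hits b Ab nPb.
apply: (Px (n + m)%N).
have -> : x ^+ (n + m) = p1 * x ^+ m + (r1 * a) * p2 + (r1 * r2) * (a * b).
  by rewrite exprD e1 e2; ring.
apply: idealD (ideal_mull _ (subringM Ar1 Ar2) Pab) => //.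
by apply: idealD (ideal_mulr _ (subringX m Ax) Pp1) (ideal_mull _ (subringM Ar1 Aa) Pp2).
Qed.

Lemma exists_maximal_ideal_sup L : ideal A L -> ~ L 1 ->
  exists M, maximal_ideal A M /\ L `<=` M.
Proof.
move=> Lideal nL1; have L1n n : ~ L (1 ^+ n) by rewrite expr1n.
have [P [[Pideal [LP P1n]] Pmax]] := exists_maximal_avoiding_powers Lideal subring1 L1n.
have nP1 : ~ P 1 by move: (P1n 0%N); rewrite expr0.
exists P; split=> //; split=> //; split.
  by move=> PA; apply: nP1; rewrite PA; exact: subring1.
move=> J Jideal PJ; have [J1|nJ1] := pselect (J 1); first by right; exact: ideal1_eq.
left; apply/seteqP; split=> //; apply: contrapT => nJP.
apply: (Pmax J); first by split.
by split=> //; split=> [y /LP /PJ //|n]; rewrite expr1n.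
Qed.

Section Localization.
Variable Q : set K.
Hypothesis Qprime : prime_ideal A Q.

Lemma localization_sub : A `<=` localization A Q.
Proof.
move=> a Aa; exists a, 1; split=> //; split; first exact: subring1.
by split; [exact: prime_ideal_not1|rewrite divr1].
Qed.

Lemma localization_subring : subring (localization A Q).
Proof.
have Qideal : ideal A Q by case: Qprime.
split; first exact: (localization_sub subring0).
split; first exact: (localization_sub subring1).
split=> _ _ [a [b [Aa [Ab [nQb ->]]]]] [c [d [Ac [Ad [nQd ->]]]]].
  exists (a * d - c * b), (b * d); split; first by apply: subringB; exact: subringM.
  split; first exact: subringM.
  split; first exact: prime_ideal_notinM.
  by field; rewrite !(notin_ideal_neq0 Qideal).
exists (a * c), (b * d); split; first exact: subringM.
split; first exact: subringM.
split; first exact: prime_ideal_notinM.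
by field; rewrite !(notin_ideal_neq0 Qideal).
Qed.

Lemma localization_common_denominator (ys : seq K) :
  (forall y, y \in ys -> localization A Q y) ->
  exists d, A d /\ ~ Q d /\ forall y, y \in ys -> A (d * y).
Proof.
have Qideal : ideal A Q by case: Qprime.
elim: ys => [|y ys IH] ysloc.
  by exists 1; split; [exact: subring1|split=> //; exact: prime_ideal_not1].
have [d [Ad [nQd dys]]] : exists d, A d /\ ~ Q d /\ forall y, y \in ys -> A (d * y).
  by apply: IH => z zys; apply: ysloc; rewrite inE zys orbT.
have [a [b [Aa [Ab [nQb ->]]]]] := ysloc y (mem_head _ _).
exists (d * b); split; first exact: subringM.
split; first exact: prime_ideal_notinM.
move=> z; rewrite inE => /orP[/eqP ->|zys]; last by rewrite mulrAC; apply/subringM/Ab/dys.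
have -> : d * b * (a / b) = d * a by field; exact: notin_ideal_neq0 Qideal _ nQb.
exact: subringM.
Qed.

End Localization.

Lemma ideal_gen_ideal (s : seq K) : (forall x, x \in s -> A x) -> ideal A (ideal_gen A s).
Proof.
move=> sA; split.
  move=> _ [r [rs [rA ->]]]; apply: big_ind; [exact: subring0|exact: subringD|].
  move=> i _; apply: subringM; last by apply/sA/mem_nth.
  by apply/rA/mem_nth; rewrite rs.
split.
  exists (nseq (size s) 0); split; first by rewrite size_nseq.
  split; first by move=> a /nseqP [-> _]; exact: subring0.
  by rewrite big1 // => i _; rewrite nth_nseq; case: ifP; rewrite mul0r.
split.
  move=> _ _ [r1 [rs1 [rA1 ->]]] [r2 [rs2 [rA2 ->]]].
  exists (mkseq (fun i => r1`_i + r2`_i) (size s)); split; first by rewrite size_mkseq.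
  split.
    move=> a /mapP [i]; rewrite mem_iota add0n => /andP[_ ilt] ->.
    by apply: subringD; [apply/rA1/mem_nth; rewrite rs1|apply/rA2/mem_nth; rewrite rs2].
  by rewrite -big_split /=; apply: eq_bigr => i _; rewrite nth_mkseq // mulrDl.
move=> a _ Aa [r [rs [rA ->]]].
exists (map (fun z => a * z) r); split; first by rewrite size_map.
split; first by move=> b /mapP [z zr ->]; apply/subringM/rA.
rewrite mulr_sumr; apply: eq_bigr => i _.
by rewrite (nth_map 0) ?rs // mulrA.
Qed.

Lemma ideal_gen_mem (s : seq K) x : x \in s -> ideal_gen A s x.
Proof.
move=> xs; have ilt : (index x s < size s)%N by rewrite index_mem.
exists (mkseq (fun i => (i == index x s)%:R) (size s)); split; first by rewrite size_mkseq.
split; first by move=> a /mapP [i _ ->]; case: eqP => _; [exact: subring1|exact: subring0].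
rewrite (bigD1 (Ordinal ilt)) //= big1 ?nth_mkseq // ?eqxx ?mul1r ?addr0 ?nth_index //.
move=> i /eqP ni; rewrite nth_mkseq //; case: eqP; last by rewrite mul0r.
by move=> ie; case: ni; apply: val_inj.
Qed.

Lemma ideal_gen_min (s : seq K) N : ideal A N -> (forall x, x \in s -> N x) ->
  ideal_gen A s `<=` N.
Proof.
move=> Nideal sN _ [r [rs [rA ->]]]; apply: big_ind; [exact: ideal0|exact: idealD|].
move=> i _; apply: (ideal_mull Nideal); last by apply: sN; apply: mem_nth.
by apply: rA; apply: mem_nth; rewrite rs.
Qed.

End Subring.

Definition valuation_of (K : fieldType) (V : set K) (v : K -> int) : Prop :=
  (forall x y, x != 0 -> y != 0 -> v (x * y) = v x + v y) /\
  (forall x y, x != 0 -> y != 0 -> x + y != 0 -> Order.min (v x) (v y) <= v (x + y)) /\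
  (exists t, t != 0 /\ v t = 1) /\
  (forall x, V x <-> (x = 0 \/ 0 <= v x)).

Lemma exists_min_valuation (K : fieldType) (v : K -> int) (s : seq K) :
  (exists2 y, y \in s & y != 0) ->
  exists g, [/\ g \in s, g != 0 & forall y, y \in s -> y != 0 -> v g <= v y].
Proof.
elim: s => [[]//|y s IH] sn0.
have [[z zs z0]|s0] := pselect (exists2 z, z \in s & z != 0).
  have [g [gs g0 gmin]] := IH (ex_intro2 _ _ z zs z0).
  have [y0|yn0] := eqVneq y 0.
    exists g; split=> [|//|x]; first by rewrite inE gs orbT.
    by case/predU1P=> [->|/gmin//]; rewrite y0 eqxx.
  have [yg|gy] := lerP (v y) (v g).
    exists y; split=> [|//|x]; rewrite ?inE ?eqxx // => /predU1P[->//|xs x0].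
    exact: le_trans yg (gmin x xs x0).
  exists g; split=> [|//|x]; first by rewrite inE gs orbT.
  by case/predU1P=> [-> _|/gmin//]; exact: ltW.
have y0 : y != 0.
  case: sn0 => x; rewrite inE => /predU1P[->//|xs x0].
  by case: s0; exists x.
exists y; split=> [|//|x]; rewrite ?inE ?eqxx // => /predU1P[->//|xs x0].
by case: s0; exists x.
Qed.

Section Valuation.
Variable K : fieldType.
Variables (R M : set K) (v : K -> int).
Hypotheses (Rsub : subring R) (Mmax : maximal_ideal R M).
Hypothesis vM : valuation_of (localization R M) v.

Lemma valuationM x y : x != 0 -> y != 0 -> v (x * y) = v x + v y.
Proof. by case: vM => vmul _; exact: vmul. Qed.
Let vadd : forall x y, x != 0 -> y != 0 -> x + y != 0 -> Order.min (v x) (v y) <= v (x + y).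
Proof. by case: vM => _ []. Qed.
Let vloc : forall x, localization R M x <-> (x = 0 \/ 0 <= v x).
Proof. by case: vM => _ [_ []]. Qed.
Let Mideal : ideal R M. Proof. by case: Mmax. Qed.

Lemma valuation1 : v 1 = 0.
Proof.
by have := valuationM (oner_neq0 K) (oner_neq0 K); rewrite mulr1 -{1}[v 1]addr0 => /addrI.
Qed.

Lemma valuationV x : x != 0 -> v x^-1 = - v x.
Proof.
move=> x0; have := valuationM x0 (invr_neq0 x0).
by rewrite mulfV // valuation1; lia.
Qed.

Lemma valuation_div x y : x != 0 -> y != 0 -> v (x / y) = v x - v y.
Proof. by move=> x0 y0; rewrite valuationM ?invr_neq0 // valuationV. Qed.

Lemma valuationX x n : x != 0 -> v (x ^+ n) = v x *+ n.
Proof.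
move=> x0; elim: n => [|n IH]; first by rewrite expr0 valuation1.
by rewrite exprS valuationM ?expf_neq0 // IH mulrS.
Qed.

Lemma valuation_ge0 x : R x -> x != 0 -> 0 <= v x.
Proof.
move=> Rx x0; case: (vloc x).1 => //.
  exact: (localization_sub Rsub (maximal_ideal_prime Rsub Mmax)) Rx.
by move=> x_0; move: x0; rewrite x_0 eqxx.
Qed.

Lemma localization_valuation_ge0 x : 0 <= v x -> localization R M x.
Proof. by move=> vx; apply/vloc; right. Qed.

Lemma valuation_unit r : R r -> ~ M r -> v r = 0.
Proof.
move=> Rr nMr; have r0 := notin_ideal_neq0 Mideal nMr.
have : localization R M r^-1.
  by exists 1, r; split; [exact: subring1|split=> //; split=> //; rewrite div1r].
case/vloc=> [|]; first by move/eqP; rewrite invr_eq0 (negPf r0).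
by rewrite valuationV //; have := valuation_ge0 Rr r0; lia.
Qed.

Lemma valuation_maximal_gt0 p : M p -> p != 0 -> 0 < v p.
Proof.
move=> Mp p0; have Rp := ideal_sub Mideal Mp.
rewrite lt_def valuation_ge0 // andbT; apply/eqP => vp0.
have [a [b [Ra [Rb [nMb pVab]]]]] : localization R M p^-1.
  by apply/vloc; right; rewrite valuationV // vp0.
have b0 := notin_ideal_neq0 Mideal nMb.
apply: nMb; have -> : b = p * a by rewrite -[b]mul1r -(mulVf p0) pVab; field.
exact: (ideal_mulr Mideal Ra Mp).
Qed.

Lemma exists_uniformizer : exists t, [/\ M t, t != 0 & v t = 1].
Proof.
have [u [u0 vu]] : exists t, t != 0 /\ v t = 1 by case: vM => _ [_ []].
have [a [b [Ra [Rb [nMb uab]]]]] : localization R M u.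
  by apply/vloc; right; rewrite vu.
have b0 := notin_ideal_neq0 Mideal nMb.
have ea : a = u * b by rewrite uab mulfVK.
have a0 : a != 0 by rewrite ea mulf_neq0.
have va : v a = 1 by rewrite ea valuationM // vu valuation_unit.
exists a; split=> //; apply: contrapT => nMa.
by move: va; rewrite valuation_unit.
Qed.

Definition valuation_ge (k : int) x := x = 0 \/ k <= v x.

Lemma valuation_geD k x y : valuation_ge k x -> valuation_ge k y -> valuation_ge k (x + y).
Proof.
have [->|x0] := eqVneq x 0; first by rewrite add0r.
have [->|y0] := eqVneq y 0; first by rewrite addr0.
have [->|xy0] := eqVneq (x + y) 0; first by left.
case=> [/eqP|kx]; first by rewrite (negPf x0).
case=> [/eqP|ky]; first by rewrite (negPf y0).
by right; apply: le_trans (vadd x0 y0 xy0); rewrite le_min kx ky.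
Qed.

Lemma valuation_geM k l x y :
  valuation_ge k x -> valuation_ge l y -> valuation_ge (k + l) (x * y).
Proof.
have [->|x0] := eqVneq x 0; first by rewrite mul0r; left.
have [->|y0] := eqVneq y 0; first by rewrite mulr0; left.
case=> [/eqP|kx]; first by rewrite (negPf x0).
case=> [/eqP|ly]; first by rewrite (negPf y0).
by right; rewrite valuationM // lerD.
Qed.

Lemma valuation_ge_sum (T : eqType) k (s : seq T) (F : T -> K) :
  (forall z, z \in s -> valuation_ge k (F z)) -> valuation_ge k (\sum_(z <- s) F z).
Proof.
elim: s => [|z s IH] sk; first by rewrite big_nil; left.
rewrite big_cons; apply: valuation_geD; first by apply: sk; rewrite inE eqxx.
by apply: IH => w ws; apply: sk; rewrite inE ws orbT.
Qed.

Lemma valuation_ge_localization x : localization R M x -> valuation_ge 0 x.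
Proof. by move/vloc. Qed.

Lemma valuation_ge_maximal x : M x -> valuation_ge 1 x.
Proof.
by move=> Mx; have [->|x0] := eqVneq x 0; [left|right; exact: valuation_maximal_gt0].
Qed.

Lemma prime_ideal_eq_maximal Q a : prime_ideal R Q -> Q `<=` M -> Q a -> a != 0 -> Q = M.
Proof.
move=> Qprime QM Qa a0; have Qideal : ideal R Q by case: Qprime.
apply/seteqP; split=> // p Mp; have [->|p0] := eqVneq p 0; first exact: ideal0 Qideal.
have [Ra Rp] := (ideal_sub Qideal Qa, ideal_sub Mideal Mp).
have [va vp] := (valuation_ge0 Ra a0, valuation_maximal_gt0 Mp p0).
pose n := `|v a|%N; have van : v a = n%:Z by rewrite /n; lia.
have pn0 : p ^+ n != 0 by rewrite expf_neq0.
have [c [b [Rc [Rb [nMb pnac]]]]] : localization R M (p ^+ n / a).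
  apply/vloc; right; rewrite valuation_div // valuationX // van subr_ge0.
  by rewrite -mulr_natr natz; nia.
have b0 := notin_ideal_neq0 Mideal nMb.
have Qpnb : Q (p ^+ n * b).
  have -> : p ^+ n * b = a * c by rewrite -[p ^+ n](mulfVK a0) pnac; field.
  exact: (ideal_mulr Qideal Rc Qa).
have [_ [_ Qmul]] := Qprime.
by case: (Qmul _ _ (subringX Rsub n Rp) Rb Qpnb) => [/(prime_ideal_expn Rsub Qprime Rp)|/QM].
Qed.

End Valuation.

Section InverseTopology.
Variable K : fieldType.
Variable R : set K.
Hypothesis Rsub : subring R.

Definition spec_D (x : K) : set (set K) := [set P | Spec R P /\ ~ P x].
Definition spec_V (xs : seq K) : set (set K) :=
  [set Q | Spec R Q /\ forall x, x \in xs -> Q x].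

Lemma zariski_open_D x : R x -> zariski_open R (spec_D x).
Proof.
move=> Rx; exists [set y | exists r, R r /\ y = r * x]; split.
  split; first by move=> _ [r [Rr ->]]; exact: subringM.
  split; first by exists 0; rewrite mul0r; split=> //; exact: subring0.
  split=> [_ _ [r [Rr ->]] [s [Rs ->]]|a _ Ra [r [Rr ->]]].
    by exists (r + s); rewrite mulrDl; split=> //; exact: subringD.
  by exists (a * r); rewrite mulrA; split=> //; exact: subringM.
apply/seteqP; split=> P [SpecP nPx]; split=> // xP; apply: nPx.
  by apply: xP; exists 1; rewrite mul1r; split=> //; exact: subring1.
by move=> _ [r [Rr ->]]; case: SpecP => Pideal _; exact: (ideal_mull Pideal Rr xP).
Qed.

Section Compactness.
Variable C : set (set (set K)).

Let uncovered : set K := [set y | R y /\ exists s : seq (set (set K)),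
  (forall V, V \in s -> C V) /\
  forall Q, Spec R Q -> (forall V, V \in s -> ~ V Q) -> Q y].

Let uncovered_ideal : ideal R uncovered.
Proof.
split; first by move=> y [].
split.
  by split; [exact: subring0|exists [::]; split=> // Q [Qideal _] _; exact: (ideal0 Qideal)].
split=> [y z [Ry [s [sC sQ]]] [Rz [t [tC tQ]]]|a y Ra [Ry [s [sC sQ]]]].
  split; first exact: subringD.
  exists (s ++ t); split=> [V|Q SpecQ stQ]; first by rewrite mem_cat => /orP[/sC|/tC].
  have [Qideal _] := SpecQ.
  apply: (idealD Qideal); [apply: sQ|apply: tQ] => // V V_ VQ;
    by apply: stQ VQ; rewrite mem_cat V_ ?orbT.
split; first exact: subringM.
exists s; split=> // Q SpecQ sQ'; have [Qideal _] := SpecQ.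
by apply: (ideal_mull Qideal Ra); apply: sQ.
Qed.

(* If no power of x lies in [uncovered], a prime avoiding those powers and
   containing [uncovered] lies in [spec_D x] but in no member of C. *)
Lemma zariski_compact_D x : R x -> (forall V, C V -> zariski_open R V) ->
  spec_D x `<=` \bigcup_(V in C) V ->
  exists s : seq (set (set K)), (forall V, V \in s -> C V) /\
    spec_D x `<=` [set P | exists V, V \in s /\ V P].
Proof.
move=> Rx Copen Dcover.
have [[n [_ [s [sC sQ]]]]|noxn] := pselect (exists n, uncovered (x ^+ n)).
  exists s; split=> // Q [SpecQ nQx]; apply: contrapT => Qns; apply: nQx.
  apply: (prime_ideal_expn Rsub SpecQ Rx); apply: sQ => // V Vs VQ.
  by apply: Qns; exists V.
have [P [Pprime [LP Pxn]]] : exists P, prime_ideal R P /\ uncovered `<=` P /\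
    forall n, ~ P (x ^+ n).
  by apply: prime_ideal_avoiding_powers uncovered_ideal Rx _ => // n Lxn; apply: noxn; exists n.
have DP : spec_D x P by split=> // Px; apply: (Pxn 1%N); rewrite expr1.
have [V CV VP] := Dcover P DP.
have [I [Iideal VI]] := Copen V CV.
move: VP; rewrite VI => -[_ /existsNP [y /not_implyP [Iy nPy]]].
case: nPy; apply: LP; split; first exact: (ideal_sub Iideal Iy).
exists [:: V]; split=> [W|Q SpecQ /(_ V (mem_head _ _))]; first by rewrite inE => /eqP ->.
by rewrite VI => QnI; apply: contrapT => nQy; apply: QnI; split=> // IQ; exact/nQy/IQ.
Qed.

End Compactness.

Lemma inverse_open_V xs : (forall x, x \in xs -> R x) -> inverse_open R (spec_V xs).
Proof.
move=> xsR tau [_ [tauSpec [_ tauI]]] tau_compact.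
elim: xs xsR => [|x xs IH] xsR.
  by rewrite (_ : spec_V [::] = Spec R) //; apply/seteqP; split=> [Q []|Q SpecQ].
have Rx : R x by apply: xsR; exact: mem_head.
have -> : spec_V (x :: xs) = [set P | Spec R P /\ ~ spec_D x P] `&` spec_V xs.
  apply/seteqP; split=> Q [SpecQ xsQ].
    split; split=> //; first by move=> [_]; apply; apply: xsQ; exact: mem_head.
    by move=> y yxs; apply: xsQ; rewrite inE yxs orbT.
  move: SpecQ xsQ => [SpecQ nDQ] [_ xsQ]; split=> // y.
  rewrite inE => /predU1P[->|]; last exact: xsQ.
  by apply: contrapT => nQx; apply: nDQ.
apply: tauI; last by apply: IH => y yxs; apply: xsR; rewrite inE yxs orbT.
apply: tau_compact; first exact: zariski_open_D.
by move=> C; apply: zariski_compact_D.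
Qed.

(* Unions of sets [spec_V xs] form a topology in which the Zariski-compact
   opens are closed, so it contains the inverse topology. *)
Let V_generated (O : set (set K)) : Prop := O `<=` Spec R /\ forall P, O P ->
  exists xs : seq K, (forall x, x \in xs -> R x /\ P x) /\ spec_V xs `<=` O.

Let V_generated_topology : is_topology_on (Spec R) V_generated.
Proof.
split; first by move=> O [].
split; first by split=> // P SpecP; exists [::]; split=> // Q [].
split=> [F Ftop|O1 O2 [O1Spec O1V] [O2Spec O2V]].
  split; first by move=> P [O FO OP]; exact: (Ftop O FO).1.
  move=> P [O FO OP]; have [xs [xsRP xsO]] := (Ftop O FO).2 P OP.
  by exists xs; split=> // Q VQ; exists O => //; apply: xsO.
split; first by move=> P [/O1Spec].
move=> P [O1P O2P]; have [xs1 [xs1RP xs1O]] := O1V P O1P; have [xs2 [xs2RP xs2O]] := O2V P O2P.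
exists (xs1 ++ xs2); split; first by move=> x; rewrite mem_cat => /orP[/xs1RP|/xs2RP].
move=> Q [SpecQ xsQ]; split; [apply: xs1O|apply: xs2O]; split=> // x x_; apply: xsQ;
  by rewrite mem_cat x_ ?orbT.
Qed.

Let V_generated_compact_closed U : zariski_open R U -> zariski_compact R U ->
  V_generated [set P | Spec R P /\ ~ U P].
Proof.
move=> [I [Iideal ->]] Ucompact; split; first by move=> P [].
move=> P [SpecP nUP].
have IP : I `<=` P.
  by move=> y Iy; apply: contrapT => nPy; apply: nUP; split=> // IP; exact/nPy/IP.
pose C := [set V | exists x, I x /\ V = spec_D x].
have Copen V : C V -> zariski_open R V.
  by move=> [x [Ix ->]]; apply: zariski_open_D; exact: (ideal_sub Iideal Ix).
have Ucover : [set P | Spec R P /\ ~ (I `<=` P)] `<=` \bigcup_(V in C) V.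
  move=> Q [SpecQ /existsNP [y /not_implyP [Iy nQy]]].
  by exists (spec_D y); [exists y|split].
have [s [sC sU]] := Ucompact C Copen Ucover.
have [xs [sxs xss]] := seq_choice (fun V Vs => sC V Vs).
exists xs; split=> [x /xss [V _ [Ix _]]|Q [SpecQ xsQ]].
  by split; [exact: (ideal_sub Iideal Ix)|exact: IP].
split=> // -[_ nIQ]; have [V [Vs VQ]] := sU Q (conj SpecQ nIQ).
have [x xxs [Ix eV]] := sxs V Vs; move: VQ; rewrite eV => -[_]; apply.
exact: xsQ.
Qed.

Lemma maxspace_open_nbhd O P : maxspace_open R O -> O P ->
  exists xs : seq K, (forall x, x \in xs -> R x /\ P x) /\
    forall Q, maximal_ideal R Q -> (forall x, x \in xs -> Q x) -> O Q.
Proof.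
move=> [O' [O'open ->]] [O'P MaxP].
have [_ O'V] := O'open _ V_generated_topology V_generated_compact_closed.
have [xs [xsRP xsO']] := O'V P O'P.
exists xs; split=> // Q MaxQ xsQ; split=> //; apply: xsO'; split=> //.
exact: maximal_ideal_prime MaxQ.
Qed.

Lemma maxspace_open_V (xs : seq K) : (forall x, x \in xs -> R x) ->
  maxspace_open R [set Q | maximal_ideal R Q /\ forall x, x \in xs -> Q x].
Proof.
move=> xsR; exists (spec_V xs); split; first exact: inverse_open_V.
apply/seteqP; split=> [Q [MaxQ xsQ]|Q [[_ xsQ] MaxQ]]; last by split.
by split=> //; split=> //; exact: maximal_ideal_prime MaxQ.
Qed.

End InverseTopology.

Section AlmostDedekind.
Variable K : fieldType.
Variable R : set K.
Hypotheses (Rsub : subring R) (Rad : almost_dedekind R).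

Lemma maximal_ideal_neq0 P : maximal_ideal R P -> exists2 a, P a & a != 0.
Proof.
move=> MaxP; have [v vP] := Rad MaxP.
by have [t [Pt t0 _]] := exists_uniformizer Rsub MaxP vP; exists t.
Qed.

Lemma maximal_ideal_sep P Q : maximal_ideal R P -> maximal_ideal R Q -> P <> Q ->
  exists2 m, P m & ~ Q m.
Proof.
move=> [_ [_ Pmax]] [Qideal [QR _]] PQ; apply: contrapT => nosep.
have PsubQ : P `<=` Q by move=> m Pm; apply: contrapT => nQm; apply: nosep; exists m.
by case: (Pmax Q Qideal PsubQ) => [/esym|].
Qed.

Lemma prime_ideal_maximal L a : prime_ideal R L -> L a -> a != 0 -> maximal_ideal R L.
Proof.
move=> Lprime La a0; have [Lideal _] := Lprime.
have [M [MaxM LM]] := exists_maximal_ideal_sup Rsub Lideal (prime_ideal_not1 Lprime).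
have [v vM] := Rad MaxM.
by rewrite (prime_ideal_eq_maximal Rsub MaxM vM Lprime LM La a0).
Qed.

Definition zero_locus (F : set (set K)) (xs : seq K) : set (set K) :=
  [set Q | F Q /\ forall x, x \in xs -> Q x].

Lemma zero_locus_cons F m xs Q : zero_locus F (m :: xs) Q <-> Q m /\ zero_locus F xs Q.
Proof.
split=> [[FQ mxsQ]|[Qm [FQ xsQ]]]; last by split=> // x; rewrite inE => /predU1P[->|/xsQ].
by split; [|split=> // x xxs]; apply: mxsQ; rewrite inE ?eqxx ?xxs ?orbT.
Qed.

Section ClosedCommonZero.
Variables (F : set (set K)) (G : set K).
Hypotheses (FMax : F `<=` Max R) (Fclosed : closed_in (Max R) (maxspace_open R) F).
Hypothesis Gn0 : exists2 g, G g & g != 0.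
Hypothesis Gfip : forall zs, (forall z, z \in zs -> G z) -> zero_locus F zs !=set0.

Definition zero_consistent (L : set K) := ideal R L /\ forall ys zs,
  (forall y, y \in ys -> L y) -> (forall z, z \in zs -> G z) -> zero_locus F (ys ++ zs) !=set0.

Let Fideal Q : F Q -> ideal R Q. Proof. by case/FMax. Qed.

Section MaximalConsistent.
Variable L : set K.
Hypotheses (Lcons : zero_consistent L) (Lmax : forall B, L `<` B -> ~ zero_consistent B).

Let Lideal : ideal R L. Proof. by case: Lcons. Qed.

Let consistent_adjoin c : R c ->
  (forall ys zs, (forall y, y \in ys -> ideal_adjoin R L c y) ->
     (forall z, z \in zs -> G z) -> zero_locus F (ys ++ zs) !=set0) -> L c.
Proof.
move=> Rc Lc_cons; apply: contrapT => nLc; apply: (Lmax (B := ideal_adjoin R L c)).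
  split; first exact: ideal_adjoin_sub.
  by move=> LcL; apply/nLc/LcL/ideal_adjoin_mem.
by split=> //; exact: ideal_adjoin_ideal.
Qed.

Let notin_separated c : ~ L c -> exists ls zs : seq K,
  [/\ forall l, l \in ls -> L l, forall z, z \in zs -> G z &
      forall Q, F Q -> (forall l, l \in ls -> Q l) -> (forall z, z \in zs -> Q z) -> ~ Q c].
Proof.
move=> nLc; have [Rc|nRc] := pselect (R c); last first.
  by exists [::], [::]; split=> // Q /Fideal Qideal _ _ /(ideal_sub Qideal).
apply: contrapT => nosep; apply: nLc; apply: consistent_adjoin => // ys zs ysLc zsG.
have [ls [lsL lsQ]] := ideal_adjoin_seq ysLc.
apply: contrapT => empty; apply: nosep; exists ls, zs; split=> // Q FQ lsQ' zsQ Qc.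
apply: empty; exists Q; split=> // y.
by rewrite mem_cat => /orP[/(lsQ Q (Fideal FQ) lsQ' Qc)|/zsQ].
Qed.

Let consistent_zero (ls zs : seq K) :
  (forall l, l \in ls -> L l) -> (forall z, z \in zs -> G z) ->
  exists2 Q, F Q & (forall l, l \in ls -> Q l) /\ (forall z, z \in zs -> Q z).
Proof.
move=> lsL zsG; have [Q [FQ lszsQ]] := Lcons.2 ls zs lsL zsG.
by exists Q => //; split=> y yin; apply: lszsQ; rewrite mem_cat yin ?orbT.
Qed.

Let consistent_zero_nil (ls : seq K) : (forall l, l \in ls -> L l) ->
  exists2 Q, F Q & forall l, l \in ls -> Q l.
Proof. by move=> lsL; have [//|Q FQ [lsQ _]] := consistent_zero lsL (zs := [::]); exists Q. Qed.

Let G_sub : G `<=` L.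
Proof.
move=> g Gg; apply: contrapT => /notin_separated [ls [zs [lsL zsG sep]]].
have [|Q FQ [lsQ gzsQ]] := consistent_zero (zs := g :: zs) lsL.
  by move=> z; rewrite inE => /predU1P[->|/zsG].
by apply: (sep Q FQ lsQ) => [z zzs|]; apply: gzsQ; rewrite inE ?eqxx ?zzs ?orbT.
Qed.

Let L_prime : prime_ideal R L.
Proof.
split=> //; split.
  move=> LR; have [|Q FQ Q1] := consistent_zero_nil (ls := [:: 1]).
    by move=> l; rewrite inE => /eqP ->; rewrite LR; exact: (subring1 Rsub).
  by apply: (maximal_ideal_not1 (FMax FQ)); apply: Q1; exact: mem_head.
move=> a b Ra Rb Lab; apply: contrapT => /not_orP [nLa nLb].
have [lsa [zsa [lsaL zsaG sepa]]] := notin_separated nLa.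
have [lsb [zsb [lsbL zsbG sepb]]] := notin_separated nLb.
have [||Q FQ [lsQ zsQ]] := consistent_zero (ls := a * b :: lsa ++ lsb) (zs := zsa ++ zsb).
- by move=> l; rewrite inE mem_cat => /predU1P[->|/orP[/lsaL|/lsbL]].
- by move=> z; rewrite mem_cat => /orP[/zsaG|/zsbG].
have [_ [_ Qmul]] := maximal_ideal_prime Rsub (FMax FQ).
case: (Qmul a b Ra Rb (lsQ _ (mem_head _ _))).
  by apply: sepa => // [l|z] lin; [apply: lsQ|apply: zsQ]; rewrite ?inE mem_cat lin ?orbT.
by apply: sepb => // [l|z] lin; [apply: lsQ|apply: zsQ]; rewrite ?inE mem_cat lin ?orbT.
Qed.

Let L_maximal : maximal_ideal R L.
Proof. by have [g Gg g0] := Gn0; exact: prime_ideal_maximal L_prime (G_sub Gg) g0. Qed.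

Let F_L : F L.
Proof.
apply: contrapT => nFL; have [O [Oopen [OL OF]]] := Fclosed L_maximal nFL.
have [xs [xsRL xsO]] := maxspace_open_nbhd Rsub Oopen OL.
have [Q FQ xsQ] := consistent_zero_nil (fun x xxs => (xsRL x xxs).2).
by apply: (OF Q) => //; apply: xsO => //; exact: FMax.
Qed.

Lemma maximal_zero_consistent : F L /\ G `<=` L.
Proof. by split; [exact: F_L|exact: G_sub]. Qed.

End MaximalConsistent.

Lemma closed_common_zero : exists2 M, F M & G `<=` M.
Proof.
have [L [Lcons Lmax]] : exists L, zero_consistent L /\
    forall B, L `<` B -> ~ zero_consistent B.
  apply: (Zorn_bigcup_nonempty (A0 := [set 0])).
  - split.
      split; first by move=> _ ->; exact: subring0.
      split=> //; split=> [_ _ -> ->|a _ _ ->]; by rewrite ?addr0 ?mulr0.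
    move=> ys zs ys0 zsG; have [Q [FQ zsQ]] := Gfip zsG.
    exists Q; split=> // y; rewrite mem_cat => /orP[/ys0 ->|/zsQ //].
    exact: (ideal0 (Fideal FQ)).
  - by exists 0.
  - move=> C Ccons Ctot Cn0; split; first by apply: ideal_bigcup_chain => // X /Ccons [].
    move=> ys zs ysC zsG; have [X CX ysX] := chain_bigcup_seq Ctot Cn0 ysC.
    exact: (Ccons X CX).2.
by have [FL GL] := maximal_zero_consistent Lcons Lmax; exists L.
Qed.

End ClosedCommonZero.

Section PerfectCountable.
Variables (F : set (set K)) (f : set K -> nat).
Hypotheses (FMax : F `<=` Max R) (Fclosed : closed_in (Max R) (maxspace_open R) F).
Hypothesis Fperfect : F `<=` derived (maxspace_open R) F.
Hypothesis f_inj : forall P Q, Max R P -> Max R Q -> f P = f Q -> P = Q.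

Lemma zero_locus_avoid xs P Q0 : (forall x, x \in xs -> R x) -> zero_locus F xs P ->
  exists m, [/\ R m, zero_locus F (m :: xs) !=set0 & ~ zero_locus F (m :: xs) Q0].
Proof.
move=> xsR xsP; have [FP _] := xsP; have MaxP := FMax FP.
have [<-|PQ0] := pselect (P = Q0).
  have [_ Plim] := Fperfect FP.
  have [Q [FQ [[MaxQ xsQ] QP]]] := Plim _ (maxspace_open_V Rsub xsR) (conj MaxP xsP.2).
  have [m Qm nPm] := maximal_ideal_sep MaxQ MaxP QP.
  exists m; split; first exact: (ideal_sub MaxQ.1 Qm).
    by exists Q; apply/zero_locus_cons.
  by case/zero_locus_cons.
have [FQ0|nFQ0] := pselect (F Q0); last first.
  exists 0; split; [exact: subring0|exists P; apply/zero_locus_cons|by case].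
  by split=> //; exact: (ideal0 MaxP.1).
have [m Pm nQ0m] := maximal_ideal_sep MaxP (FMax FQ0) PQ0.
exists m; split; first exact: (ideal_sub MaxP.1 Pm).
  by exists P; apply/zero_locus_cons.
by case/zero_locus_cons.
Qed.

Let fibre_subsingleton n : exists Q0, forall Q, Max R Q -> f Q = n -> Q = Q0.
Proof.
have [[Q1 [MaxQ1 fQ1]]|none] := pselect (exists Q1, Max R Q1 /\ f Q1 = n).
  by exists Q1 => Q MaxQ fQ; apply: f_inj => //; rewrite fQ fQ1.
by exists set0 => Q MaxQ fQ; case: none; exists Q.
Qed.

Let avoiding_sequence (xs0 : seq K) : (forall x, x \in xs0 -> R x) -> zero_locus F xs0 !=set0 ->
  exists u : nat -> seq K, u 0%N = xs0 /\ forall n,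
    [/\ zero_locus F (u n) !=set0, {subset u n <= u n.+1} &
        forall Q, Max R Q -> f Q = n -> ~ zero_locus F (u n.+1) Q].
Proof.
move=> xs0R xs0n0.
pose good xs := (forall x, x \in xs -> R x) /\ zero_locus F xs !=set0.
pose step n xs ys := exists m, ys = m :: xs /\
  forall Q, Max R Q -> f Q = n -> ~ zero_locus F ys Q.
have good_step n xs : good xs -> exists ys, good ys /\ step n xs ys.
  move=> [xsR [P xsP]]; have [Q0 fibre] := fibre_subsingleton n.
  have [m [Rm mxsn0 nQ0]] := zero_locus_avoid Q0 xsR xsP.
  exists (m :: xs); split; last by exists m; split=> // Q MaxQ /(fibre Q MaxQ) ->.
  by split=> // x; rewrite inE => /predU1P[->|/xsR].
have [u [u0 u_step]] := nat_dependent_choice (conj xs0R xs0n0) good_step.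
exists u; split=> // n; have [[_ un0] [m [-> sep]]] := u_step n.
by split=> // x xun; rewrite inE xun orbT.
Qed.

Lemma perfect_countable_empty : F = set0.
Proof.
apply/seteqP; split=> // P0 FP0.
have [a0 P0a0 a00] := maximal_ideal_neq0 (FMax FP0).
have a0R x : x \in [:: a0] -> R x.
  by rewrite inE => /eqP ->; exact: (ideal_sub (FMax FP0).1 P0a0).
have a0n0 : zero_locus F [:: a0] !=set0 by exists P0; apply/zero_locus_cons.
have [u [u0 u_step]] := avoiding_sequence a0R a0n0.
pose G := [set x | exists n, x \in u n].
have Gn0 : exists2 g, G g & g != 0 by exists a0 => //; exists 0%N; rewrite u0 mem_head.
have Gfip zs : (forall z, z \in zs -> G z) -> zero_locus F zs !=set0.
  have u_incr n : {subset u n <= u n.+1} by case: (u_step n).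
  move=> /(increasing_seq_bigcup u_incr) [n zsun].
  by have [[Q [FQ unQ]] _ _] := u_step n; exists Q; split=> // z /zsun /unQ.
have [M FM GM] := closed_common_zero FMax Fclosed Gn0 Gfip.
have [_ _ sep] := u_step (f M).
apply: (sep M (FMax FM) erefl); split=> // x xu; apply: GM.
by exists (f M).+1.
Qed.

End PerfectCountable.

Lemma countable_maxspace_scattered :
  countable_set (Max R) -> scattered (Max R) (maxspace_open R).
Proof.
move=> [f f_inj].
have [I [lt [D [i [ltW [Diter DiD]]]]]] :=
  tower_transfinite_iter (Max R) (@derived_sub _ (maxspace_open R)).
exists I, lt, D, i; split=> //; split=> //.
have [DiMax Diclosed] := transfinite_derived_closed ltW.1 Diter i.
apply: (perfect_countable_empty DiMax Diclosed _ f_inj).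
by rewrite DiD.
Qed.

End AlmostDedekind.

Lemma ideal_ext_mem (K : fieldType) (T I : set K) x p : T x -> I p -> ideal_ext T I (x * p).
Proof. by move=> Tx Ip; exists [:: (x, p)]; rewrite big_seq1; split=> // z /[!inE] /eqP ->. Qed.

Lemma sub_ideal_ext (K : fieldType) (T I : set K) : subring T -> I `<=` ideal_ext T I.
Proof. by move=> Tsub p Ip; rewrite -[p]mul1r; apply: ideal_ext_mem => //; exact: subring1. Qed.

Lemma ideal_sq_sub (K : fieldType) (T N : set K) : ideal T N -> ideal_sq N `<=` N.
Proof.
move=> Nideal _ [s [sN ->]]; apply: (ideal_sum Nideal) => z /sN [Nz1 Nz2].
exact: (ideal_mulr Nideal (ideal_sub Nideal Nz2) Nz1).
Qed.

Section Overring.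
Variable K : fieldType.
Variable R : set K.
Hypotheses (Rsub : subring R) (Rad : almost_dedekind R).
Variable C : set (set K).
Hypothesis CMax : C `<=` Max R.

Local Notation T := (overring R C).

Let Cprime Q : C Q -> prime_ideal R Q.
Proof. by move=> /CMax; exact: maximal_ideal_prime. Qed.

Lemma overring_subring : subring T.
Proof.
have Csub Q : C Q -> subring (localization R Q) by move/Cprime/(localization_subring Rsub).
split; first by move=> Q /Csub; exact: subring0.
split; first by move=> Q /Csub; exact: subring1.
by split=> x y Tx Ty Q CQ; [apply: (subringB (Csub Q CQ))|apply: (subringM (Csub Q CQ))];
  [exact: Tx|exact: Ty|exact: Tx|exact: Ty].
Qed.

Lemma sub_overring : R `<=` T.
Proof. by move=> x Rx Q /Cprime CQ; exact: (localization_sub Rsub CQ). Qed.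

Lemma overring_ideal_gen1 (ys : seq K) : (forall y, y \in ys -> R y) ->
  (exists2 y, y \in ys & y != 0) -> (forall Q, C Q -> exists2 y, y \in ys & ~ Q y) ->
  ideal_gen T ys 1.
Proof.
move=> ysR ys_n0 ysC; apply: contrapT => nys1.
have ysT y : y \in ys -> T y by move/ysR/sub_overring.
have ysTideal := ideal_gen_ideal overring_subring ysT.
pose L := [set r | R r /\ ideal_gen T ys r].
have Lideal : ideal R L.
  split; first by move=> r [].
  split; first by split; [exact: subring0|exact: (ideal0 ysTideal)].
  split=> [x y [Rx ysx] [Ry ysy]|a x Ra [Rx ysx]]; split.
  - exact: subringD.
  - exact: (idealD ysTideal).
  - exact: subringM.
  - exact: (ideal_mull ysTideal (sub_overring Ra)).
have [M [MaxM LM]] := exists_maximal_ideal_sup Rsub Lideal (fun L1 => nys1 L1.2).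
have [w wM] := Rad MaxM.
have [g [gys g0 gmin]] := exists_min_valuation w ys_n0.
have ysg_loc z : z \in [seq y / g | y <- ys] -> localization R M z.
  move=> /mapP [y yys ->]; have [->|y0] := eqVneq y 0.
    rewrite mul0r; apply: (localization_sub Rsub (maximal_ideal_prime Rsub MaxM)).
    exact: subring0.
  by apply: (localization_valuation_ge0 wM); rewrite (valuation_div wM) // subr_ge0 gmin.
(* A common denominator d of the y / g puts d / g in T, hence d in ysT. *)
have [d [Rd [nMd dysg]]] :=
  localization_common_denominator Rsub (maximal_ideal_prime Rsub MaxM) ysg_loc.
have Tdg : T (d / g).
  move=> Q CQ; have [y yys nQy] := ysC Q CQ.
  have y0 : y != 0 by apply: contra_notN nQy => /eqP ->; exact: (ideal0 (CMax CQ).1).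
  exists (d * (y / g)), y; split; first exact: dysg (map_f _ yys).
  by split; [exact: ysR|split=> //; apply/esym; rewrite mulrCA mulrC mulKf].
apply: nMd; apply: LM; split=> //.
rewrite -(mulfVK g0 d); exact: (ideal_mull ysTideal Tdg (ideal_gen_mem overring_subring gys)).
Qed.

Lemma ideal_ext_min N P : ideal T N -> P `<=` N -> ideal_ext T P `<=` N.
Proof.
move=> Nideal PN _ [s [sTP ->]]; apply: (ideal_sum Nideal) => z /sTP [Tz1 Pz2].
exact: (ideal_mull Nideal Tz1 (PN _ Pz2)).
Qed.

Section ValuationOverring.
Variables (P : set K) (v : K -> int).
Hypotheses (MaxP : maximal_ideal R P) (vP : valuation_of (localization R P) v).

Let Pideal : ideal R P. Proof. by case: MaxP. Qed.

Lemma overring_prime_not_sub N t p : prime_ideal T N -> N t -> t != 0 -> v t = 1 ->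
  P p -> ~ N p -> exists b, [/\ R b, N b & ~ P b].
Proof.
move=> Nprime Nt t0 vt Pp nNp; have [Nideal [_ Nmul]] := Nprime.
have p0 : p != 0 by apply: contra_notN nNp => /eqP ->; exact: (ideal0 Nideal).
have [a [b [Ra [Rb [nPb pt_ab]]]]] : localization R P (p / t).
  apply: (localization_valuation_ge0 vP).
  rewrite (valuation_div vP) // vt subr_ge0.
  by have := valuation_maximal_gt0 Rsub MaxP vP Pp p0; lia.
have b0 := notin_ideal_neq0 Pideal nPb.
have Npb : N (p * b).
  have -> : p * b = a * t by rewrite -[p](mulfVK t0) pt_ab; field.
  exact: (ideal_mull Nideal (sub_overring Ra) Nt).
case: (Nmul p b (sub_overring (ideal_sub Pideal Pp)) (sub_overring Rb) Npb) => // Nb.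
by exists b.
Qed.

Hypothesis PTmax : maximal_ideal T (ideal_ext T P).

Lemma overring_sub_localization : T `<=` localization R P.
Proof.
have [PTideal [PTproper _]] := PTmax.
move=> x Tx; apply: contrapT => nlocx.
have x0 : x != 0.
  apply: contra_notN nlocx => /eqP ->.
  exact: (localization_sub Rsub (maximal_ideal_prime Rsub MaxP) (subring0 Rsub)).
have vx : v x < 0 by rewrite ltNge; apply/negP => /(localization_valuation_ge0 vP).
have [p [s [Rp [Rs [nPs xV_ps]]]]] : localization R P x^-1.
  by apply: (localization_valuation_ge0 vP); rewrite (valuationV vP) // oppr_ge0 ltW.
have s0 := notin_ideal_neq0 Pideal nPs.
have ep : p = x^-1 * s by rewrite xV_ps mulfVK.
have Pp : P p.
  apply: contrapT => nPp; have := valuation_unit Rsub MaxP vP Rp nPp.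
  rewrite ep (valuationM vP) ?invr_neq0 // (valuationV vP) //.
  rewrite (valuation_unit Rsub MaxP vP Rs nPs).
  by rewrite addr0 => /eqP; rewrite oppr_eq0 => /eqP vx0; move: vx; rewrite vx0 ltxx.
have es : s = x * p by rewrite ep mulVKf.
have PTs : ideal_ext T P s by rewrite es; exact: ideal_ext_mem.
have [m [r [Pm [Rr e1]]]] := maximal_ideal_comaximal Rsub MaxP Rs nPs.
apply: PTproper; apply: (ideal1_eq PTideal); rewrite e1.
apply: (idealD PTideal); first exact: (sub_ideal_ext overring_subring).
exact: (ideal_mull PTideal (sub_overring Rr) PTs).
Qed.

Lemma uniformizer_notin_ideal_sq t : t != 0 -> v t = 1 -> ~ ideal_sq (ideal_ext T P) t.
Proof.
have PT_ge1 z : ideal_ext T P z -> valuation_ge v 1 z.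
  move=> [s [sTP ->]]; apply: (valuation_ge_sum vP) => w /sTP [Tw1 Pw2].
  rewrite -[1]add0r; apply: (valuation_geM vP).
    exact/(valuation_ge_localization vP)/overring_sub_localization.
  exact: (valuation_ge_maximal Rsub MaxP vP).
move=> t0 vt [s [sPT et]]; have : valuation_ge v 2 t.
  rewrite et; apply: (valuation_ge_sum vP) => z /sPT [PTz1 PTz2].
  by rewrite -[2]/(1 + 1); apply: (valuation_geM vP); exact: PT_ge1.
by case=> [/eqP|]; rewrite ?(negPf t0) // vt.
Qed.

End ValuationOverring.

Lemma crit_ext_limit P O : maximal_ideal R P -> Crit T (ideal_ext T P) ->
  maxspace_open R O -> O P -> exists Q, [/\ C Q, O Q & Q <> P].
Proof.
move=> MaxP [PTmax PTcrit] Oopen OP; apply: contrapT => noQ.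
have isolated Q : C Q -> O Q -> Q = P.
  by move=> CQ OQ; apply: contrapT => QP; apply: noQ; exists Q.
have [v vP] := Rad MaxP.
have [t [Pt t0 vt]] := exists_uniformizer Rsub MaxP vP.
have [xs [xsRP xsO]] := maxspace_open_nbhd Rsub Oopen OP.
have txsT y : y \in t :: xs -> T y.
  rewrite inE => /predU1P[->|/xsRP [Ry _]]; apply: sub_overring => //.
  exact: (ideal_sub MaxP.1 Pt).
have Jideal := ideal_gen_ideal overring_subring txsT.
have JPT : ideal_gen T (t :: xs) `<=` ideal_ext T P.
  apply: (ideal_gen_min PTmax.1) => y; rewrite inE.
  by case/predU1P=> [->|/xsRP [_ Py]]; apply: (sub_ideal_ext overring_subring).
have [N [MaxN JN2]] := PTcrit _ Jideal (ex_intro _ (t :: xs) (conj txsT erefl)) JPT.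
have txsN y : y \in t :: xs -> N y.
  move=> yin; apply: (ideal_sq_sub MaxN.1); apply: JN2.
  exact: (ideal_gen_mem overring_subring).
have [p Pp nNp] : exists2 p, P p & ~ N p.
  apply: contrapT => PN.
  have PTN : ideal_ext T P `<=` N.
    by apply: (ideal_ext_min MaxN.1) => q Pq; apply: contrapT => nNq; apply: PN; exists q.
  have [NPT|NT] := PTmax.2.2 N MaxN.1 PTN; last by case: MaxN => _ [].
  apply: (uniformizer_notin_ideal_sq MaxP vP PTmax t0 vt); rewrite -NPT; apply: JN2.
  exact: (ideal_gen_mem overring_subring (mem_head _ _)).
have [b [Rb Nb nPb]] := overring_prime_not_sub MaxP vP
  (maximal_ideal_prime overring_subring MaxN) (txsN t (mem_head _ _)) t0 vt Pp nNp.
have bxsR y : y \in b :: xs -> R y by rewrite inE => /predU1P[->|/xsRP []].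
have b0 := notin_ideal_neq0 MaxP.1 nPb.
have bxs_avoid Q : C Q -> exists2 y, y \in b :: xs & ~ Q y.
  move=> CQ; apply: contrapT => bxsQ'.
  have bxsQ y : y \in b :: xs -> Q y.
    by move=> yin; apply: contrapT => nQy; apply: bxsQ'; exists y.
  have OQ : O Q by apply: xsO (CMax CQ) _ => x xxs; apply: bxsQ; rewrite inE xxs orbT.
  by apply: nPb; rewrite -(isolated Q CQ OQ); apply: bxsQ; exact: mem_head.
have bxs1 := overring_ideal_gen1 bxsR (ex_intro2 _ _ b (mem_head _ _) b0) bxs_avoid.
apply: (maximal_ideal_not1 MaxN); apply: (ideal_gen_min MaxN.1 _ bxs1).
by move=> y; rewrite inE => /predU1P[->//|yxs]; apply: txsN; rewrite inE yxs orbT.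
Qed.

End Overring.

Section SPScattered.
Variable K : fieldType.
Variable R : set K.
Hypotheses (Rsub : subring R) (Rad : almost_dedekind R).

Definition crit_step (C : set (set K)) : set (set K) :=
  [set P | maximal_ideal R P /\ Crit (overring R C) (ideal_ext (overring R C) P)].

Lemma crit_step_sub_derived (C B : set (set K)) :
  B `<=` Max R /\ closed_in (Max R) (maxspace_open R) B -> C `<=` B ->
  crit_step C `<=` derived (maxspace_open R) B.
Proof.
move=> [BMax Bclosed] CB P [MaxP Pcrit].
have CMax Q : C Q -> Max R Q by move/CB/BMax.
apply: (derived_closed_limit Bclosed CB MaxP) => O Oopen OP.
by have [Q [CQ OQ QP]] := crit_ext_limit Rsub Rad CMax MaxP Pcrit Oopen OP; exists Q.
Qed.

Lemma scattered_SP_scattered :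
  scattered (Max R) (maxspace_open R) -> SP_scattered R.
Proof.
move=> [I [lt [D [i [ltW [Diter Di0]]]]]].
have [C Citer] := exists_transfinite_iter (Max R) crit_step ltW.
exists I, lt, C, i; split=> //; split; first exact: Citer.
apply/seteqP; split=> // P CiP; rewrite -Di0.
apply: (transfinite_iter_sub ltW.1 Citer Diter (transfinite_derived_closed ltW.1 Diter)) CiP.
exact: crit_step_sub_derived.
Qed.

End SPScattered.

Theorem proposition5p5 (K : fieldType) (R : set K) :
  subring R -> is_frac_field R -> almost_dedekind R ->
  (countable_set (Max R) -> scattered (Max R) (maxspace_open R)) /\
  (scattered (Max R) (maxspace_open R) -> SP_scattered R).
Proof.
move=> Rsub _ Rad.
by split; [exact: countable_maxspace_scattered|exact: scattered_SP_scattered].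
Qed.
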